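(* In the periodic lock scheduling problem, there exists an optimal schedule $\sigma$ that is periodic with period of length at most $8\Lambda$, where $\Lambda=\operatorname{lcm}(\lambda_1,\dots,\lambda_k)$.
   Context: Periodic lock scheduling problem. Time is discrete, periods $t=1,2,\dots$. There are $k$ vessel streams; stream $i$ has a direction $\delta_i\in\{D,U\}$, an integer periodicity $\lambda_i\ge1$ and an integer offset $1\le\mu_i\le\lambda_i$; $a_i(t)=1$ if $t\equiv\mu_i\pmod{\lambda_i}$ and $0$ otherwise, $a_\delta(t)=\sum_{i:\delta_i=\delta}a_i(t)$. A schedule is a sequence $\sigma=(\sigma(t))_{t\ge1}$ with $\sigma(t)\in\{D,U,W\}$ ($D$: process downstream waiting vessels and switch alignment from downstream to upstream; $U$ symmetrically; $W$: wait at current alignment); the initial orientation is arbitrary; it is feasible if the non-$W$ actions alternate between $D$ and $U$. A sequence is periodic with period $P$ if $\sigma(t)=\sigma(t+P)$ for all $t$. Queue lengths: $n_D(0)=n_U(0)=0$ and for $t\ge1$, $n_\delta(t)=0$ if $\sigma(t)=\delta$ and $n_\delta(t)=n_\delta(t-1)+a_\delta(t)$ otherwise. $C_\sigma(t)=n_D(t)+n_U(t)$ and $C_{\mathrm{avg},\sigma}=\lim_{T\to\infty}\frac1T\sum_{t=1}^TC_\sigma(t)$. A schedule is optimal if it is feasible and minimizes $C_{\mathrm{avg},\sigma}$ over all feasible schedules. *)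

From Stdlib Require Import Reals Arith List Lia.
From Coquelicot Require Import Coquelicot.
Open Scope R_scope.

Inductive dir : Type := DirD | DirU.

Inductive action : Type := ActD | ActU | ActW.

Definition act_of_dir (d : dir) : action :=
  match d with DirD => ActD | DirU => ActU end.

Definition stream : Type := (dir * nat * nat)%type.
Definition s_dir (s : stream) : dir := fst (fst s).
Definition s_lam (s : stream) : nat := snd (fst s).
Definition s_mu  (s : stream) : nat := snd s.

Definition stream_wf (s : stream) : Prop :=
  (1 <= s_lam s)%nat /\ (1 <= s_mu s)%nat /\ (s_mu s <= s_lam s)%nat.

Definition arrives (s : stream) (t : nat) : bool :=
  Nat.eqb (t mod s_lam s) (s_mu s mod s_lam s).

Definition dir_eqb (d1 d2 : dir) : bool :=
  match d1, d2 with DirD, DirD | DirU, DirU => true | _, _ => false end.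

Definition arrivals (ss : list stream) (d : dir) (t : nat) : nat :=
  length (filter (fun s => andb (dir_eqb (s_dir s) d) (arrives s t)) ss).

Definition big_lambda (ss : list stream) : nat :=
  fold_right Nat.lcm 1%nat (map s_lam ss).

(* Schedules: sigma : nat -> action, only sigma t for t >= 1 is relevant. *)
Definition schedule : Type := nat -> action.

(* Feasible: the non-W actions (at periods t >= 1) alternate between D and U;
   the initial orientation is arbitrary. *)
Definition feasible (sigma : schedule) : Prop :=
  forall t1 t2 : nat, (1 <= t1)%nat -> (t1 < t2)%nat ->
    sigma t1 <> ActW -> sigma t2 <> ActW ->
    (forall t, (t1 < t)%nat -> (t < t2)%nat -> sigma t = ActW) ->
    sigma t1 <> sigma t2.

Definition periodic (sigma : schedule) (P : nat) : Prop :=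
  forall t : nat, (1 <= t)%nat -> sigma t = sigma (t + P)%nat.

Definition action_eqb (a b : action) : bool :=
  match a, b with
  | ActD, ActD | ActU, ActU | ActW, ActW => true
  | _, _ => false
  end.

Fixpoint queue (ss : list stream) (sigma : schedule) (d : dir) (t : nat) : nat :=
  match t with
  | O => O
  | S t' => if action_eqb (sigma (S t')) (act_of_dir d) then O
            else (queue ss sigma d t' + arrivals ss d (S t'))%nat
  end.

Definition cost (ss : list stream) (sigma : schedule) (t : nat) : nat :=
  (queue ss sigma DirD t + queue ss sigma DirU t)%nat.

Fixpoint total_cost (ss : list stream) (sigma : schedule) (T : nat) : nat :=
  match T with
  | O => O
  | S T' => (total_cost ss sigma T' + cost ss sigma (S T'))%nat
  end.

Definition avg_cost (ss : list stream) (sigma : schedule) (T : nat) : R :=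
  INR (total_cost ss sigma T) / INR T.

(* Optimal: feasible, C_avg (a limit) exists and is finite, and it is
   <= C_avg of every feasible schedule for which C_avg exists
   (in the extended reals). *)
Definition optimal (ss : list stream) (sigma : schedule) : Prop :=
  feasible sigma /\
  exists c : R,
    is_lim_seq (avg_cost ss sigma) (Finite c) /\
    forall sigma' : schedule, feasible sigma' ->
      forall l : Rbar, is_lim_seq (avg_cost ss sigma') l ->
        Rbar_le (Finite c) l.

(* Every feasible schedule carries an alignment sequence (the side the lock is open to
   after each period), and replacing two consecutive waits by the two movements then
   available keeps it feasible without lengthening any queue.  For schedules without two
   consecutive waits, the cost of period t is a function of a state made of t mod Lambda,
   the direction of the last movement, whether period t is a wait, and whether the
   movement before the last one was followed by a wait: the schedule is a walk in a graph
   with 8 Lambda states, and its total cost is the weight of the walk.  A closed walk of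
   minimal mean weight among those of length at most 8 Lambda unrolls into a periodic
   schedule with that mean as average cost; repeatedly cutting a repeated state out of
   an arbitrary walk shows that no feasible schedule does asymptotically better. *)

From Stdlib Require Import Reals Arith List Lia Lra Classical.
From Coquelicot Require Import Coquelicot.

Open Scope nat_scope.

Lemma succ_mod n t : S t mod n = S (t mod n) mod n.
Proof.
  rewrite <- (Nat.add_1_r t), <- (Nat.add_1_r (t mod n)).
  now rewrite Nat.Div0.add_mod_idemp_l.
Qed.

Fixpoint sum_to (f : nat -> nat) (n : nat) : nat :=
  match n with
  | O => O
  | S n' => sum_to f n' + f n
  end.

Lemma sum_to_ext f g n : (forall k, 1 <= k <= n -> f k = g k) -> sum_to f n = sum_to g n.
Proof.
  induction n as [|n IH]; intros H; simpl; [reflexivity|].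
  rewrite IH, H; [reflexivity|lia|]. intros k Hk. apply H. lia.
Qed.

Lemma sum_to_add f a b : sum_to f (a + b) = sum_to f a + sum_to (fun k => f (a + k)) b.
Proof.
  induction b as [|b IH]; simpl; [now rewrite !Nat.add_0_r|].
  rewrite Nat.add_succ_r. simpl. rewrite IH. lia.
Qed.

Lemma sum_to_le f a b : a <= b -> sum_to f a <= sum_to f b.
Proof.
  intros Hab. replace b with (a + (b - a)) by lia. rewrite sum_to_add. lia.
Qed.

Lemma sum_to_periodic_shift h L a : (forall k, h (k + L) = h k) ->
  sum_to (fun k => h (a + k)) L = sum_to h L.
Proof.
  intros Hh. induction a as [|a IH]; [reflexivity|].
  pose proof (sum_to_add (fun k => h (a + k)) 1 L) as E1.
  pose proof (sum_to_add (fun k => h (a + k)) L 1) as E2.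
  rewrite Nat.add_comm, E2 in E1. simpl in E1.
  replace (a + (L + 1)) with (a + 1 + L) in E1 by lia. rewrite Hh in E1.
  rewrite <- IH. transitivity (sum_to (fun k => h (a + S k)) L); [|lia].
  apply sum_to_ext. intros k _. f_equal. lia.
Qed.

Lemma sum_to_add_period g L n : (forall k, 1 <= k -> g (k + L) = g k) ->
  sum_to g (L + n) = sum_to g L + sum_to g n.
Proof.
  intros Hg. rewrite sum_to_add. f_equal. apply sum_to_ext. intros k Hk.
  rewrite Nat.add_comm. apply Hg. lia.
Qed.

Lemma sum_to_periods g L q j : (forall k, 1 <= k -> g (k + L) = g k) ->
  sum_to g (q * L + j) = q * sum_to g L + sum_to g j.
Proof.
  intros Hg. induction q as [|q IH]; [reflexivity|].
  cbn [Nat.mul]. rewrite <- Nat.add_assoc, sum_to_add_period, IH by exact Hg. lia.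
Qed.

Lemma sum_to_linear_bounds f a L : 1 <= L -> (forall t, a < t -> f (t + L) = f t) ->
  exists M, forall T, sum_to f T * L <= sum_to (fun k => f (a + k)) L * T + M /\
                     sum_to (fun k => f (a + k)) L * T <= sum_to f T * L + M.
Proof.
  intros HL Hf. set (m := sum_to (fun k => f (a + k)) L).
  exists (sum_to f (a + L) * L + m * (a + L)). intros T.
  destruct (Nat.le_gt_cases T a) as [HT|HT].
  { pose proof (sum_to_le f T (a + L) ltac:(lia)). split; nia. }
  set (g k := f (a + k)).
  assert (Hg : forall k, 1 <= k -> g (k + L) = g k)
    by (intros k Hk; unfold g; rewrite Nat.add_assoc; apply Hf; lia).
  set (q := (T - a) / L). set (j := (T - a) mod L).
  assert (Hj : j < L) by (apply Nat.mod_upper_bound; lia).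
  assert (ET : T = a + (q * L + j)) by (pose proof (Nat.div_mod_eq (T - a) L); unfold q, j; lia).
  assert (Hsum : sum_to f T = sum_to f (a + j) + q * m).
  { rewrite ET, (sum_to_add f a (q * L + j)), (sum_to_add f a j). unfold m.
    change (fun k => f (a + k)) with g. rewrite sum_to_periods by exact Hg. lia. }
  pose proof (sum_to_le f (a + j) (a + L) ltac:(lia)).
  rewrite Hsum, ET. split; nia.
Qed.

Lemma pigeonhole N (f : nat -> nat) : (forall k, k <= N -> f k < N) ->
  exists i j, i < j <= N /\ f i = f j.
Proof.
  intros Hf. apply NNPP. intros Hno.
  assert (Hnd : NoDup (map f (seq 0 (S N)))).
  { apply NoDup_map_NoDup_ForallPairs; [|apply seq_NoDup].
    intros i j Hi Hj Eij. apply in_seq in Hi, Hj.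
    destruct (Nat.lt_trichotomy i j) as [Hl|[He|Hl]]; [|exact He|];
      exfalso; apply Hno; [exists i, j|exists j, i]; split; auto; lia. }
  apply NoDup_incl_length with (l' := seq 0 N) in Hnd.
  - rewrite length_map, !length_seq in Hnd. lia.
  - intros y Hy. apply in_map_iff in Hy as [k [<- Hk]]. apply in_seq in Hk.
    apply in_seq. specialize (Hf k). lia.
Qed.

Lemma divide_fact L N : 1 <= L <= N -> Nat.divide L (fact N).
Proof.
  induction N as [|N IH]; intros HL; [lia|].
  destruct (Nat.eq_dec L (S N)) as [->|HN].
  - exists (fact N). simpl. ring.
  - apply Nat.divide_trans with (fact N); [apply IH; lia|]. exists (S N). simpl. ring.
Qed.

(* Ratios [m / L] with [L <= N] are compared through the integers [m * (N! / L)]. *)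
Lemma min_ratio_exists (P : nat -> nat -> Prop) N : (exists L m, 1 <= L <= N /\ P L m) ->
  exists Ls ms, 1 <= Ls <= N /\ P Ls ms /\
    forall L m, 1 <= L <= N -> P L m -> ms * L <= m * Ls.
Proof.
  intros [L0 [m0 H0]].
  destruct (dec_inh_nat_subset_has_unique_least_element
              (fun k => exists L m, (1 <= L <= N /\ P L m) /\ m * (fact N / L) = k))
    as [k [[[Ls [ms [[HLs HP] <-]]] Hmin] _]]; [intros; apply classic|eauto|].
  exists Ls, ms. split; [exact HLs|split; [exact HP|]]. intros L m HL HPL.
  specialize (Hmin _ (ex_intro _ L (ex_intro _ m (conj (conj HL HPL) eq_refl)))).
  destruct (divide_fact Ls N HLs) as [a Ha], (divide_fact L N HL) as [b Hb].
  assert (Ea : fact N / Ls = a) by (rewrite Ha; apply Nat.div_mul; lia).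
  assert (Eb : fact N / L = b) by (rewrite Hb; apply Nat.div_mul; lia).
  rewrite Ea, Eb in Hmin.
  apply (Nat.mul_le_mono_pos_r _ _ (fact N)); [apply lt_O_fact|].
  replace (ms * L * fact N) with (ms * a * (L * Ls)) by (rewrite Ha; ring).
  replace (m * Ls * fact N) with (m * b * (L * Ls)) by (rewrite Hb; ring).
  now apply Nat.mul_le_mono_r.
Qed.

Section MeanCycle.
Variables (V : Type) (edge : V -> V -> Prop) (w : V -> nat) (code : V -> nat) (N : nat).
Hypothesis code_inj : forall x y, code x = code y -> x = y.

Definition walk (p : nat -> V) (n : nat) : Prop :=
  (forall k, k < n -> edge (p k) (p (S k))) /\ (forall k, k <= n -> code (p k) < N).

Definition walk_weight (p : nat -> V) (n : nat) : nat := sum_to (fun k => w (p k)) n.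

Definition closed_walk (L m : nat) : Prop :=
  exists p, walk p L /\ p L = p 0 /\ walk_weight p L = m.

Lemma walk_repeats p n : walk p n -> N <= n -> exists i j, i < j <= N /\ p i = p j.
Proof.
  intros [_ Hc] Hn. destruct (pigeonhole N (fun k => code (p k))) as [i [j [Hij E]]].
  - intros k Hk. apply Hc. lia.
  - exists i, j. auto.
Qed.

Lemma closed_walk_of_repeat p n i j : walk p n -> i < j <= n -> p i = p j ->
  closed_walk (j - i) (sum_to (fun k => w (p (i + k))) (j - i)).
Proof.
  intros [He Hc] Hij E. exists (fun k => p (i + k)). repeat split.
  - intros k Hk. simpl. rewrite Nat.add_succ_r. apply He. lia.
  - intros k Hk. apply Hc. lia.
  - now rewrite Nat.add_0_r, E, Nat.add_comm, Nat.sub_add by lia.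
Qed.

Lemma closed_walk_exists p : walk p N -> exists L m, 1 <= L <= N /\ closed_walk L m.
Proof.
  intros Hp. destruct (walk_repeats p N Hp) as [i [j [Hij E]]]; [lia|].
  exists (j - i), (sum_to (fun k => w (p (i + k))) (j - i)). split; [lia|].
  now apply (closed_walk_of_repeat p N).
Qed.

Definition cut_walk (p : nat -> V) (i l : nat) : nat -> V :=
  fun k => if k <=? i then p k else p (k + l).

Lemma walk_cut p n i j : walk p n -> i < j <= n -> p i = p j ->
  walk (cut_walk p i (j - i)) (n - (j - i)).
Proof.
  intros [He Hcode] Hij E. unfold cut_walk. split.
  - intros k Hk. destruct (Nat.leb_spec k i), (Nat.leb_spec (S k) i).
    + apply He. lia.
    + replace k with i by lia. rewrite E. replace (S i + (j - i)) with (S j) by lia.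
      apply He. lia.
    + lia.
    + rewrite Nat.add_succ_l. apply He. lia.
  - intros k Hk. destruct (Nat.leb_spec k i); apply Hcode; lia.
Qed.

Lemma walk_weight_cut p n i j : i < j <= n ->
  walk_weight p n = walk_weight (cut_walk p i (j - i)) (n - (j - i))
                    + sum_to (fun k => w (p (i + k))) (j - i).
Proof.
  intros Hij. unfold walk_weight.
  replace n with (i + (j - i) + (n - j)) at 1 by lia.
  replace (n - (j - i)) with (i + (n - j)) by lia.
  rewrite !sum_to_add.
  rewrite (sum_to_ext (fun k => w (cut_walk p i (j - i) k)) (fun k => w (p k))),
          (sum_to_ext (fun k => w (cut_walk p i (j - i) (i + k)))
                      (fun k => w (p (i + (j - i) + k)))).
  - lia.
  - intros k Hk. unfold cut_walk. destruct (Nat.leb_spec (i + k) i); [lia|]. do 2 f_equal. lia.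
  - intros k Hk. unfold cut_walk. destruct (Nat.leb_spec k i); [reflexivity|lia].
Qed.

Section LowerBound.
Variables (Ls ms : nat).
Hypothesis best : forall L m, 1 <= L <= N -> closed_walk L m -> ms * L <= m * Ls.

(* Cutting out a repeated state removes a closed walk, whose weight is at least its
   length times the best mean. *)
Lemma walk_weight_lower_bound n : forall p, walk p n -> ms * n <= walk_weight p n * Ls + ms * N.
Proof.
  induction n as [n IH] using lt_wf_ind. intros p Hp.
  destruct (Nat.le_gt_cases n N) as [Hn|Hn]; [nia|].
  destruct (walk_repeats p n Hp) as [i [j [Hij E]]]; [lia|].
  pose proof (best (j - i) _ ltac:(lia) (closed_walk_of_repeat p n i j Hp ltac:(lia) E)) as Hc.
  pose proof (IH (n - (j - i)) ltac:(lia) _ (walk_cut p n i j Hp ltac:(lia) E)) as Hrest.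
  rewrite (walk_weight_cut p n i j) by lia.
  replace (ms * n) with (ms * (n - (j - i)) + ms * (j - i)) by nia.
  nia.
Qed.

End LowerBound.

Lemma closed_walk_unroll p L : 1 <= L -> walk p L -> p L = p 0 ->
  forall n, edge (p (n mod L)) (p (S n mod L)).
Proof.
  intros HL [He _] Hc n. rewrite succ_mod.
  assert (Hn : n mod L < L) by (apply Nat.mod_upper_bound; lia).
  replace (p (S (n mod L) mod L)) with (p (S (n mod L))); [apply He; lia|].
  destruct (Nat.eq_dec (S (n mod L)) L) as [E|E].
  - rewrite E, Nat.Div0.mod_same. exact Hc.
  - now rewrite (Nat.mod_small (S (n mod L))) by lia.
Qed.

Lemma walk_weight_unroll p L : p L = p 0 ->
  sum_to (fun k => w (p (k mod L))) L = walk_weight p L.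
Proof.
  intros Hc. apply sum_to_ext. intros k Hk.
  destruct (Nat.eq_dec k L) as [->|E].
  - now rewrite Nat.Div0.mod_same, Hc.
  - now rewrite Nat.mod_small by lia.
Qed.

End MeanCycle.

Arguments walk {V}.
Arguments walk_weight {V}.
Arguments closed_walk {V}.

Open Scope R_scope.

Lemma is_lim_seq_plus_inv (c K : R) : is_lim_seq (fun n => c + K * / INR n) c.
Proof.
  assert (H0 : is_lim_seq (fun n => / INR n) 0)
    by exact (is_lim_seq_inv _ _ is_lim_seq_INR ltac:(discriminate)).
  pose proof (is_lim_seq_plus' _ _ c _ (is_lim_seq_const c)
                (is_lim_seq_mult' _ _ K _ (is_lim_seq_const K) H0)) as H.
  now rewrite Rmult_0_r, Rplus_0_r in H.
Qed.

Lemma Rdiv_le_add_div (a b c d M : R) : 0 < b -> 0 < d -> a * d <= c * b + M ->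
  a / b <= c / d + M / b * / d.
Proof.
  intros Hb Hd H.
  replace (a / b) with (a * d * / (b * d)) by (field; lra).
  replace (c / d + M / b * / d) with ((c * b + M) * / (b * d)) by (field; lra).
  apply Rmult_le_compat_r; [left; apply Rinv_0_lt_compat; nra|exact H].
Qed.

Lemma INR_mul_le (a b c d M : nat) : (a * b <= c * d + M)%nat ->
  INR a * INR b <= INR c * INR d + INR M.
Proof. intros H. rewrite <- !mult_INR, <- plus_INR. now apply le_INR. Qed.

Lemma avg_lower_bound (u : nat -> nat) (L m M : nat) (l : Rbar) : (1 <= L)%nat ->
  (forall T, (m * T <= u T * L + M)%nat) ->
  is_lim_seq (fun T => INR (u T) / INR T) l -> Rbar_le (INR m / INR L) l.
Proof.
  intros HL Hb Hl.
  apply (is_lim_seq_le_loc (fun n => INR m / INR L + - (INR M / INR L) * / INR n)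
           (fun T => INR (u T) / INR T));
    [|apply is_lim_seq_plus_inv|exact Hl].
  exists 1%nat. intros n Hn.
  assert (HLpos : 0 < INR L) by (apply lt_0_INR; lia).
  assert (Hnpos : 0 < INR n) by (apply lt_0_INR; lia).
  pose proof (Rdiv_le_add_div (INR m) (INR L) (INR (u n)) (INR n) (INR M)) as H.
  specialize (H ltac:(lra) ltac:(lra) (INR_mul_le _ _ _ _ _ (Hb n))).
  lra.
Qed.

Lemma avg_limit (u : nat -> nat) (L m M : nat) : (1 <= L)%nat ->
  (forall T, (u T * L <= m * T + M)%nat /\ (m * T <= u T * L + M)%nat) ->
  is_lim_seq (fun T => INR (u T) / INR T) (INR m / INR L).
Proof.
  intros HL Hb.
  apply (is_lim_seq_le_le_loc (fun n => INR m / INR L + - (INR M / INR L) * / INR n)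
           (fun T => INR (u T) / INR T) (fun n => INR m / INR L + INR M / INR L * / INR n));
    [|apply is_lim_seq_plus_inv|apply is_lim_seq_plus_inv].
  exists 1%nat. intros n Hn.
  assert (HLpos : 0 < INR L) by (apply lt_0_INR; lia).
  assert (Hnpos : 0 < INR n) by (apply lt_0_INR; lia).
  pose proof (Rdiv_le_add_div (INR m) (INR L) (INR (u n)) (INR n) (INR M)) as H1.
  pose proof (Rdiv_le_add_div (INR (u n)) (INR n) (INR m) (INR L) (INR M)) as H2.
  specialize (H1 ltac:(lra) ltac:(lra) (INR_mul_le _ _ _ _ _ (proj2 (Hb n)))).
  specialize (H2 ltac:(lra) ltac:(lra) (INR_mul_le _ _ _ _ _ (proj1 (Hb n)))).
  replace (INR M / INR n * / INR L) with (INR M / INR L * / INR n) in H2 by (field; lra).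
  lra.
Qed.

Close Scope R_scope.

Definition dopp (d : dir) : dir := match d with DirD => DirU | DirU => DirD end.
Definition dir_of (a : action) : dir := match a with ActU => DirU | _ => DirD end.
Definition isW (a : action) : bool := match a with ActW => true | _ => false end.

Lemma dopp_involutive d : dopp (dopp d) = d.
Proof. now destruct d. Qed.

Lemma act_of_dir_neq_W d : act_of_dir d <> ActW.
Proof. now destruct d. Qed.

Lemma act_of_dir_dopp_neq d : act_of_dir (dopp d) <> act_of_dir d.
Proof. now destruct d. Qed.

Lemma dir_of_act_of_dir d : dir_of (act_of_dir d) = d.
Proof. now destruct d. Qed.

Lemma act_of_dir_of a : a <> ActW -> act_of_dir (dir_of a) = a.
Proof. now destruct a. Qed.

Lemma distinct_actions_opposite a b : a <> ActW -> b <> ActW -> a <> b -> b = act_of_dir (dopp (dir_of a)).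
Proof. destruct a, b; simpl; congruence. Qed.

(* [o t] is the side the lock is open to after period [t]; [o 0] is the initial one. *)
Definition aligned (sg : schedule) (o : nat -> dir) : Prop :=
  forall t, match sg (S t) with
            | ActW => o (S t) = o t
            | a => a = act_of_dir (o t) /\ o (S t) = dopp (o t)
            end.

Section Aligned.
Variables (sg : schedule) (o : nat -> dir).
Hypothesis Ho : aligned sg o.

Lemma aligned_waits u n : (forall v, u < v <= u + n -> sg v = ActW) -> o (u + n) = o u.
Proof.
  induction n as [|n IH]; intros Hw; [now rewrite Nat.add_0_r|].
  specialize (Ho (u + n)). rewrite <- Nat.add_succ_r, (Hw (u + S n)) in Ho by lia.
  rewrite Ho. apply IH. intros v Hv. apply Hw. lia.
Qed.

Lemma aligned_act t : sg (S t) <> ActW -> sg (S t) = act_of_dir (o t) /\ o (S t) = dopp (o t).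
Proof. specialize (Ho t). now destruct (sg (S t)). Qed.

Lemma aligned_alternate u v : 1 <= u < v -> sg u <> ActW -> sg v <> ActW ->
  (forall w, u < w < v -> sg w = ActW) -> dir_of (sg v) = dopp (dir_of (sg u)).
Proof.
  intros Huv Hu Hv Hw.
  destruct u as [|u]; [lia|]. destruct v as [|v]; [lia|].
  destruct (aligned_act u Hu) as [-> Eu], (aligned_act v Hv) as [-> _].
  rewrite !dir_of_act_of_dir, <- Eu.
  replace v with (S u + (v - S u)) by lia.
  apply aligned_waits. intros w Hw'. apply Hw. lia.
Qed.

Lemma aligned_feasible : feasible sg.
Proof.
  intros t1 t2 H1 H12 Hn1 Hn2 Hw.
  rewrite <- (act_of_dir_of (sg t1)), <- (act_of_dir_of (sg t2)) by assumption.
  rewrite (aligned_alternate t1 t2) by (auto; lia || (intros w []; auto)).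
  apply not_eq_sym, act_of_dir_dopp_neq.
Qed.

End Aligned.

Definition next_action_is (sg : schedule) (t : nat) (d : dir) : Prop :=
  forall s, t < s -> sg s <> ActW -> (forall v, t < v < s -> sg v = ActW) -> sg s = act_of_dir d.

Fixpoint alignment (sg : schedule) (d0 : dir) (t : nat) : dir :=
  match t with
  | O => d0
  | S t' => match sg (S t') with
            | ActW => alignment sg d0 t'
            | a => dopp (dir_of a)
            end
  end.

Lemma initial_alignment_exists (sg : schedule) : exists d0, next_action_is sg 0 d0.
Proof.
  destruct (classic (next_action_is sg 0 DirD)) as [HD|HD]; [now exists DirD|].
  exists DirU. unfold next_action_is in HD.
  apply not_all_ex_not in HD as [s0 HD].
  apply imply_to_and in HD as [H0 HD]. apply imply_to_and in HD as [Hn0 HD].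
  apply imply_to_and in HD as [Hw0 HD0].
  intros s Hs Hn Hw.
  assert (s = s0) as ->.
  { destruct (Nat.lt_trichotomy s s0) as [Hl|[Hl|Hl]]; [|exact Hl|].
    - exfalso. apply Hn, Hw0. lia.
    - exfalso. apply Hn0, Hw. lia. }
  destruct (sg s0); simpl in *; congruence.
Qed.

Lemma feasible_aligned (sg : schedule) : feasible sg -> exists o, aligned sg o.
Proof.
  intros Hf. destruct (initial_alignment_exists sg) as [d0 H0].
  assert (Hnext : forall t, next_action_is sg t (alignment sg d0 t)).
  { induction t as [|t IH]; [exact H0|].
    intros s Hs Hn Hw.
    assert (Hact : forall a, sg (S t) = a -> a <> ActW -> sg s = act_of_dir (dopp (dir_of a))).
    { intros a <- Ha. apply distinct_actions_opposite; [exact Ha|exact Hn|].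
      apply (Hf (S t) s); [lia|lia|exact Ha|exact Hn|intros v ? ?; apply Hw; lia]. }
    simpl. destruct (sg (S t)) eqn:E; [apply (Hact ActD)|apply (Hact ActU)|]; try easy.
    apply IH; auto; [lia|]. intros v Hv.
    destruct (Nat.eq_dec v (S t)) as [->|]; [exact E|]. apply Hw. lia. }
  exists (alignment sg d0). intros t.
  assert (Ha : sg (S t) <> ActW -> sg (S t) = act_of_dir (alignment sg d0 t))
    by (intros; apply Hnext; [lia|assumption|lia]).
  simpl. destruct (sg (S t)); try reflexivity.
  all: specialize (Ha ltac:(discriminate)); split; [exact Ha|].
  all: destruct (alignment sg d0 t); simpl in *; congruence.
Qed.

Lemma action_eqb_eq a b : action_eqb a b = true <-> a = b.
Proof. destruct a, b; simpl; intuition congruence. Qed.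

Lemma queue_le ss (sg1 sg2 : schedule) d :
  (forall t, sg1 t <> ActW -> sg2 t = sg1 t) ->
  forall t, queue ss sg2 d t <= queue ss sg1 d t.
Proof.
  intros Hagree t. induction t as [|t IH]; [reflexivity|]. simpl.
  destruct (action_eqb (sg1 (S t)) (act_of_dir d)) eqn:E1.
  - apply action_eqb_eq in E1.
    rewrite Hagree, E1 by (rewrite E1; apply act_of_dir_neq_W).
    now destruct d.
  - destruct (action_eqb (sg2 (S t)) (act_of_dir d)); lia.
Qed.

Lemma total_cost_le ss (sg1 sg2 : schedule) :
  (forall t, sg1 t <> ActW -> sg2 t = sg1 t) ->
  forall T, total_cost ss sg2 T <= total_cost ss sg1 T.
Proof.
  intros Hagree T. induction T as [|T IH]; [reflexivity|]. simpl. unfold cost.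
  pose proof (queue_le ss sg1 sg2 DirD Hagree (S T)).
  pose proof (queue_le ss sg1 sg2 DirU Hagree (S T)). lia.
Qed.

Lemma total_cost_sum_to ss sg T : total_cost ss sg T = sum_to (cost ss sg) T.
Proof. induction T as [|T IH]; simpl; congruence. Qed.

Definition no_double_wait (sg : schedule) (T : nat) : Prop :=
  forall t, 1 <= t -> S t <= T -> sg t = ActW -> sg (S t) <> ActW.

Definition fill_waits (sg : schedule) (d : dir) (u : nat) : schedule :=
  fun v => if Nat.eq_dec v u then act_of_dir d
           else if Nat.eq_dec v (S u) then act_of_dir (dopp d) else sg v.

Lemma aligned_fill_waits sg o t : aligned sg o -> sg (S t) = ActW -> sg (S (S t)) = ActW ->
  aligned (fill_waits sg (o t) (S t)) (fun v => if Nat.eq_dec v (S t) then dopp (o t) else o v).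
Proof.
  intros Ho W1 W2 v. unfold fill_waits.
  destruct (Nat.eq_dec (S v) (S t)) as [E|E].
  - assert (v = t) as -> by lia.
    destruct (Nat.eq_dec t (S t)); [lia|]. now destruct (o t).
  - destruct (Nat.eq_dec (S v) (S (S t))) as [E'|E'].
    + assert (v = S t) as -> by lia. destruct (Nat.eq_dec (S t) (S t)); [|easy].
      pose proof (Ho t) as H1. pose proof (Ho (S t)) as H2. rewrite W1 in H1. rewrite W2 in H2.
      rewrite H2, H1, dopp_involutive. now destruct (o t).
    + destruct (Nat.eq_dec v (S t)) as [->|]; [lia|]. apply Ho.
Qed.

Lemma exists_no_double_wait sg o : aligned sg o -> forall T, exists sg' o',
  aligned sg' o' /\ (forall t, sg t <> ActW -> sg' t = sg t) /\ no_double_wait sg' T.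
Proof.
  intros Ho T. induction T as [|T IH].
  { exists sg, o. repeat split; auto. intros t _ HT. lia. }
  destruct IH as [sg' [o' [Ho' [Hagree Hnd]]]].
  destruct T as [|t].
  { exists sg', o'. repeat split; auto. intros t Ht HT. lia. }
  destruct (sg' (S t)) eqn:W1; [| |destruct (sg' (S (S t))) eqn:W2].
  1-4: exists sg', o'; repeat split; auto; intros v Hv HT Wv;
    destruct (Nat.eq_dec v (S t)) as [->|]; try congruence; apply Hnd; auto; lia.
  eexists; eexists. split; [exact (aligned_fill_waits sg' o' t Ho' W1 W2)|].
  unfold fill_waits. split.
  - intros v Hv.
    destruct (Nat.eq_dec v (S t)) as [->|]; [exfalso; apply Hv; rewrite <- Hagree; auto|].
    destruct (Nat.eq_dec v (S (S t))) as [->|]; [exfalso; apply Hv; rewrite <- Hagree; auto|].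
    auto.
  - intros v Hv HT.
    destruct (Nat.eq_dec v (S t)) as [->|]; [intros Hc; destruct (act_of_dir_neq_W _ Hc)|].
    destruct (Nat.eq_dec v (S (S t))) as [->|]; [lia|].
    destruct (Nat.eq_dec (S v) (S t)) as [E|]; [intros _; apply act_of_dir_neq_W|].
    destruct (Nat.eq_dec (S v) (S (S t))) as [E|]; [lia|]. apply Hnd; auto; lia.
Qed.

Fixpoint window (ss : list stream) (d : dir) (t m : nat) : nat :=
  match m with
  | O => O
  | S m' => arrivals ss d t + window ss d (pred t) m'
  end.

Lemma queue_window ss sg d u t : 1 <= u <= t -> sg u = act_of_dir d ->
  (forall v, u < v <= t -> sg v <> act_of_dir d) ->
  queue ss sg d t = window ss d t (t - u).
Proof.
  intros Hut Hd Hn.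
  enough (Hq : forall n, u + n <= t -> queue ss sg d (u + n) = window ss d (u + n) n)
    by (replace t with (u + (t - u)) at 1 2 by lia; apply Hq; lia).
  induction n as [|n IH]; intros Hnt.
  - destruct u as [|u]; [lia|]. simpl. rewrite Nat.add_0_r, Hd. now destruct d.
  - rewrite Nat.add_succ_r. simpl.
    destruct (action_eqb (sg (S (u + n))) (act_of_dir d)) eqn:E.
    + apply action_eqb_eq in E. exfalso. apply (Hn (S (u + n))); [lia|exact E].
    + rewrite IH by lia. lia.
Qed.

Lemma lambda_divides ss s : In s ss -> Nat.divide (s_lam s) (big_lambda ss).
Proof.
  induction ss as [|s' ss IH]; simpl; [tauto|]. intros [->|Hs].
  - apply Nat.divide_lcm_l.
  - apply Nat.divide_trans with (big_lambda ss); [now apply IH|apply Nat.divide_lcm_r].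
Qed.

Lemma big_lambda_neq_0 ss : List.Forall stream_wf ss -> big_lambda ss <> 0.
Proof.
  induction 1 as [|s ss [Hs _] _ IH]; unfold big_lambda in *; simpl; [lia|].
  rewrite Nat.lcm_eq_0. lia.
Qed.

Lemma arrivals_add_lambda ss d t k : arrivals ss d (t + k * big_lambda ss) = arrivals ss d t.
Proof.
  unfold arrivals. f_equal. apply filter_ext_in. intros s Hs. unfold arrives.
  destruct (lambda_divides ss s Hs) as [c ->].
  now rewrite Nat.mul_assoc, Nat.Div0.mod_add.
Qed.

Lemma window_add_lambda ss d t k m : m <= S t ->
  window ss d (t + k * big_lambda ss) m = window ss d t m.
Proof.
  revert t. induction m as [|m IH]; intros t Hm; [reflexivity|]. simpl.
  rewrite arrivals_add_lambda. f_equal.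
  destruct m as [|m]; [reflexivity|].
  replace (pred (t + k * big_lambda ss)) with (pred t + k * big_lambda ss) by lia.
  apply IH. lia.
Qed.
(* [gap]: whether the movement before the last one was followed by a wait. *)
Record state := State { residue : nat; last_dir : dir; waiting : bool; gap : bool }.

Section States.
Variable ss : list stream.
Local Notation Lam := (big_lambda ss).

Definition act_step (s : state) : state :=
  State (S (residue s) mod Lam) (dopp (last_dir s)) false (waiting s).
Definition wait_step (s : state) : state :=
  State (S (residue s) mod Lam) (last_dir s) true (gap s).

Inductive step : state -> state -> Prop :=
| step_act s : step s (act_step s)
| step_wait s : waiting s = false -> step s (wait_step s).

Definition last_action (sg : schedule) (t : nat) : nat := t - Nat.b2n (isW (sg t)).

Definition state_of (sg : schedule) (t : nat) : state :=
  let u := last_action sg t in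
  State (t mod Lam) (dir_of (sg u)) (isW (sg t)) (isW (sg (u - 1))).

Definition pattern_cost (t : nat) (s : state) : nat :=
  window ss (last_dir s) t (Nat.b2n (waiting s)) +
  window ss (dopp (last_dir s)) t (S (Nat.b2n (waiting s) + Nat.b2n (gap s))).

(* The shift by [2 * Lam] keeps the windows away from period 0. *)
Definition state_cost (s : state) : nat := pattern_cost (residue s + 2 * Lam) s.

Lemma pattern_cost_add_lambda t k s : 2 <= t ->
  pattern_cost (t + k * Lam) s = pattern_cost t s.
Proof.
  intros Ht. unfold pattern_cost.
  rewrite 2!window_add_lambda; [reflexivity|..]; destruct (waiting s), (gap s); simpl; lia.
Qed.

Lemma state_cost_pattern_cost t s : Lam <> 0 -> 2 <= t -> residue s = t mod Lam ->
  state_cost s = pattern_cost t s.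
Proof.
  intros HL Ht Hr. unfold state_cost. rewrite Hr.
  rewrite <- (pattern_cost_add_lambda (t mod Lam + 2 * Lam) (t / Lam)) by lia.
  rewrite <- (pattern_cost_add_lambda t 2) by lia.
  f_equal. pose proof (Nat.div_mod_eq t Lam). nia.
Qed.

Lemma waits_after_last_action sg t v : last_action sg t < v <= t -> sg v = ActW.
Proof.
  unfold last_action. intros Hv. destruct (sg t) eqn:E; simpl in Hv; try lia.
  now replace v with t by lia.
Qed.

Lemma cost_split sg t z : cost ss sg t = queue ss sg z t + queue ss sg (dopp z) t.
Proof. unfold cost. destruct z; simpl; lia. Qed.

Section NoDoubleWait.
Variables (sg : schedule) (o : nat -> dir) (T : nat).
Hypotheses (Ho : aligned sg o) (Hnd : no_double_wait sg T).

Lemma last_action_not_W t : 2 <= t <= T -> sg (last_action sg t) <> ActW.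
Proof.
  intros Ht. unfold last_action. destruct (sg t) eqn:E; simpl; rewrite ?Nat.sub_0_r, ?E; try easy.
  intros Hw. apply (Hnd (t - 1)); [lia|lia|exact Hw|]. now replace (S (t - 1)) with t by lia.
Qed.

Lemma cost_pattern t : 4 <= t <= T -> cost ss sg t = pattern_cost t (state_of sg t).
Proof.
  intros Ht. unfold pattern_cost, state_of. cbn [last_dir waiting gap].
  set (u1 := last_action sg t). set (u2 := last_action sg (u1 - 1)). set (z := dir_of (sg u1)).
  assert (Et : t = u1 + Nat.b2n (isW (sg t)))
    by (unfold u1, last_action; destruct (isW (sg t)); simpl; lia).
  pose proof (Nat.b2n_le_1 (isW (sg t))).
  assert (Eu : u1 - 1 = u2 + Nat.b2n (isW (sg (u1 - 1))))
    by (unfold u2, last_action; destruct (isW (sg (u1 - 1))); simpl; lia).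
  pose proof (Nat.b2n_le_1 (isW (sg (u1 - 1)))).
  assert (A1 : sg u1 <> ActW) by (apply last_action_not_W; lia).
  assert (A2 : sg u2 <> ActW) by (apply last_action_not_W; lia).
  assert (Hz : dir_of (sg u2) = dopp z).
  { unfold z. rewrite (aligned_alternate sg o Ho u2 u1), dopp_involutive; auto; [lia|].
    intros w Hw. apply (waits_after_last_action sg (u1 - 1)). lia. }
  rewrite (cost_split sg t z).
  rewrite (queue_window ss sg z u1 t), (queue_window ss sg (dopp z) u2 t).
  - f_equal; f_equal; lia.
  - lia.
  - rewrite <- Hz. symmetry. now apply act_of_dir_of.
  - intros v Hv. destruct (Nat.lt_trichotomy v u1) as [Hl|[->|Hl]].
    + rewrite (waits_after_last_action sg (u1 - 1)) by lia. apply not_eq_sym, act_of_dir_neq_W.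
    + unfold z. rewrite <- (act_of_dir_of (sg u1)) at 1 by exact A1.
      apply not_eq_sym, act_of_dir_dopp_neq.
    + rewrite (waits_after_last_action sg t) by lia. apply not_eq_sym, act_of_dir_neq_W.
  - lia.
  - symmetry. now apply act_of_dir_of.
  - intros v Hv. rewrite (waits_after_last_action sg t) by lia. apply not_eq_sym, act_of_dir_neq_W.
Qed.

Lemma last_action_act t : sg t <> ActW -> last_action sg t = t.
Proof. unfold last_action. destruct (sg t); simpl; try lia. easy. Qed.

Lemma step_state_of t : 2 <= t -> S t <= T -> step (state_of sg t) (state_of sg (S t)).
Proof.
  intros Ht HT. unfold state_of at 2. destruct (isW (sg (S t))) eqn:E.
  - assert (Hw : sg t <> ActW)
      by (intros Hw; apply (Hnd t ltac:(lia) HT Hw); now destruct (sg (S t))).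
    assert (Hl : last_action sg (S t) = t) by (unfold last_action; rewrite E; simpl; lia).
    rewrite Hl, succ_mod.
    replace (isW (sg (t - 1))) with (gap (state_of sg t))
      by (unfold state_of; now rewrite last_action_act).
    replace (dir_of (sg t)) with (last_dir (state_of sg t))
      by (unfold state_of; now rewrite last_action_act).
    apply step_wait. unfold state_of. simpl. now destruct (sg t).
  - assert (Hn : sg (S t) <> ActW) by now destruct (sg (S t)).
    rewrite last_action_act, succ_mod, Nat.sub_1_r by exact Hn. simpl.
    rewrite (aligned_alternate sg o Ho (last_action sg t) (S t)).
    + replace (isW (sg t)) with (waiting (state_of sg t)) by reflexivity. apply step_act.
    + unfold last_action. destruct (isW (sg t)); simpl; lia.
    + apply last_action_not_W; lia.
    + exact Hn.
    + intros w Hw. apply (waits_after_last_action sg t). lia.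
Qed.

End NoDoubleWait.

Definition dir_code (d : dir) : nat := match d with DirD => 0 | DirU => 1 end.

Definition state_code (s : state) : nat :=
  8 * residue s + 4 * dir_code (last_dir s) + 2 * Nat.b2n (waiting s) + Nat.b2n (gap s).

Lemma state_code_inj s s' : state_code s = state_code s' -> s = s'.
Proof.
  destruct s as [r z e g], s' as [r' z' e' g']. unfold state_code. simpl.
  destruct z, z', e, e', g, g'; simpl; intros H; try lia; f_equal; lia.
Qed.

Lemma state_code_bound s : state_code s < 8 * Lam <-> residue s < Lam.
Proof.
  unfold state_code. destruct (last_dir s), (waiting s), (gap s); simpl; lia.
Qed.

Local Notation state_walk := (walk step state_code (8 * Lam)).
Local Notation state_cycle := (closed_walk step state_cost state_code (8 * Lam)).

Lemma cost_state_cost sg o T t : aligned sg o -> no_double_wait sg T -> Lam <> 0 -> 4 <= t <= T ->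
  cost ss sg t = state_cost (state_of sg t).
Proof.
  intros Ho Hnd HL Ht. rewrite (cost_pattern sg o T Ho Hnd t Ht).
  symmetry. apply state_cost_pattern_cost; [exact HL|lia|reflexivity].
Qed.

Lemma feasible_cost_lower_bound Ls ms sg : Lam <> 0 -> feasible sg ->
  (forall L m, 1 <= L <= 8 * Lam -> state_cycle L m -> ms * L <= m * Ls) ->
  forall T, ms * T <= total_cost ss sg T * Ls + ms * (8 * Lam + 4).
Proof.
  intros HL Hf Hbest T.
  destruct (feasible_aligned sg Hf) as [o Ho].
  destruct (Nat.le_gt_cases T 4) as [HT|HT]; [nia|].
  destruct (exists_no_double_wait sg o Ho T) as [sg' [o' [Ho' [Hagree Hnd]]]].
  set (p k := state_of sg' (4 + k)).
  assert (Hp : state_walk p (T - 4)).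
  { split.
    - intros k Hk. unfold p. rewrite Nat.add_succ_r. apply (step_state_of sg' o' T); auto; lia.
    - intros k _. apply state_code_bound. apply Nat.mod_upper_bound. exact HL. }
  pose proof (walk_weight_lower_bound _ _ _ _ _ state_code_inj Ls ms Hbest (T - 4) p Hp) as Hlow.
  assert (Hw : walk_weight state_cost p (T - 4) <= total_cost ss sg' T).
  { rewrite total_cost_sum_to. replace T with (4 + (T - 4)) at 2 by lia. rewrite sum_to_add.
    unfold walk_weight. rewrite (sum_to_ext _ (fun k => cost ss sg' (4 + k))); [lia|].
    intros k Hk. unfold p. symmetry. apply (cost_state_cost sg' o' T); auto; lia. }
  pose proof (total_cost_le ss sg sg' Hagree T).
  replace (ms * T) with (ms * (T - 4) + ms * 4) by nia. nia.
Qed.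

Definition state_action (s : state) : action := if waiting s then ActW else act_of_dir (last_dir s).

Lemma isW_state_action s : isW (state_action s) = waiting s.
Proof. unfold state_action. now destruct (waiting s), (last_dir s). Qed.

Lemma dir_of_state_action s : waiting s = false -> dir_of (state_action s) = last_dir s.
Proof. unfold state_action. intros ->. apply dir_of_act_of_dir. Qed.

Lemma state_eta s : s = State (residue s) (last_dir s) (waiting s) (gap s).
Proof. now destruct s. Qed.

Lemma step_inv s s' : step s s' ->
  residue s' = S (residue s) mod Lam /\
  if waiting s' then waiting s = false /\ last_dir s' = last_dir s /\ gap s' = gap s
  else last_dir s' = dopp (last_dir s) /\ gap s' = waiting s.
Proof. destruct 1; simpl; auto. Qed.

Section WalkSchedule.
Variable r : nat -> state.
Hypothesis r_step : forall n, step (r n) (r (S n)).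

Lemma walk_schedule_aligned :
  aligned (fun t => state_action (r t)) (fun t => dopp (last_dir (r t))).
Proof.
  intros t. destruct (step_inv _ _ (r_step t)) as [_ H]. unfold state_action.
  destruct (waiting (r (S t))).
  - now destruct H as [_ [-> _]].
  - destruct H as [-> _]. rewrite dopp_involutive. now destruct (last_dir (r t)).
Qed.

Lemma walk_schedule_no_double_wait T : no_double_wait (fun t => state_action (r t)) T.
Proof.
  intros t _ _. destruct (step_inv _ _ (r_step t)) as [_ H]. unfold state_action.
  destruct (waiting (r (S t))); [|intros _; apply act_of_dir_neq_W].
  destruct H as [-> _]. intros Hc. destruct (act_of_dir_neq_W _ Hc).
Qed.

Hypothesis r_residue : forall n, residue (r n) = n mod Lam.

Lemma state_of_walk_schedule t : 2 <= t -> state_of (fun t => state_action (r t)) t = r t.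
Proof.
  intros Ht. rewrite (state_eta (r t)). unfold state_of, last_action.
  rewrite !isW_state_action, r_residue.
  destruct (step_inv _ _ (r_step (t - 1))) as [_ H1].
  replace (S (t - 1)) with t in H1 by lia.
  destruct (waiting (r t)) eqn:E; simpl; rewrite ?Nat.sub_0_r.
  - destruct H1 as [E1 [-> ->]].
    rewrite dir_of_state_action by exact E1.
    destruct (step_inv _ _ (r_step (t - 1 - 1))) as [_ H2].
    replace (S (t - 1 - 1)) with (t - 1) in H2 by lia. rewrite E1 in H2.
    now destruct H2 as [_ ->].
  - destruct H1 as [_ ->]. now rewrite dir_of_state_action.
Qed.

End WalkSchedule.

Lemma step_residue r : (forall n, step (r n) (r (S n))) -> residue (r 0) < Lam ->
  forall n, residue (r n) = (residue (r 0) + n) mod Lam.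
Proof.
  intros Hr H0 n. induction n as [|n IH].
  - now rewrite Nat.add_0_r, Nat.mod_small.
  - rewrite (proj1 (step_inv _ _ (Hr n))), IH, <- succ_mod. f_equal. lia.
Qed.

Lemma state_walk_exists n : Lam <> 0 -> exists p, state_walk p n.
Proof.
  intros HL. exists (fun k => Nat.iter k act_step (State 0 DirD false false)). split.
  - intros k _. apply step_act.
  - intros k _. apply state_code_bound. destruct k; simpl; [lia|]. now apply Nat.mod_upper_bound.
Qed.

Section CycleSchedule.
Variables (p : nat -> state) (L : nat).
Hypotheses (HLam : Lam <> 0) (HL : 1 <= L) (Hp : state_walk p L) (Hc : p L = p 0).

Definition cycle_state (n : nat) : state := p ((n + (Lam - residue (p 0))) mod L).

Definition cycle_schedule : schedule := fun t => state_action (cycle_state t).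

Lemma cycle_state_step n : step (cycle_state n) (cycle_state (S n)).
Proof.
  unfold cycle_state. rewrite Nat.add_succ_l.
  exact (closed_walk_unroll _ _ state_code _ p L HL Hp Hc _).
Qed.

Lemma cycle_state_residue n : residue (cycle_state n) = n mod Lam.
Proof.
  assert (H0 : residue (p 0) < Lam) by (apply state_code_bound, (proj2 Hp); lia).
  pose proof (step_residue (fun m => p (m mod L))
                (closed_walk_unroll _ _ state_code _ p L HL Hp Hc)) as Hres.
  cbv beta in Hres. rewrite Nat.Div0.mod_0_l in Hres. unfold cycle_state.
  rewrite Hres by exact H0.
  replace (residue (p 0) + (n + (Lam - residue (p 0)))) with (n + 1 * Lam) by lia.
  apply Nat.Div0.mod_add.
Qed.

Lemma cycle_state_periodic n : cycle_state (n + L) = cycle_state n.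
Proof.
  unfold cycle_state. f_equal.
  replace (n + L + (Lam - residue (p 0))) with (n + (Lam - residue (p 0)) + 1 * L) by lia.
  apply Nat.Div0.mod_add.
Qed.

Lemma cycle_schedule_periodic : periodic cycle_schedule L.
Proof. intros t _. unfold cycle_schedule. now rewrite cycle_state_periodic. Qed.

Lemma cycle_schedule_feasible : feasible cycle_schedule.
Proof. exact (aligned_feasible _ _ (walk_schedule_aligned _ cycle_state_step)). Qed.

Lemma cycle_schedule_cost t : 4 <= t -> cost ss cycle_schedule t = state_cost (cycle_state t).
Proof.
  intros Ht. unfold cycle_schedule.
  rewrite (cost_state_cost _ _ t t (walk_schedule_aligned _ cycle_state_step)
             (walk_schedule_no_double_wait _ cycle_state_step t) HLam) by lia.
  f_equal. apply state_of_walk_schedule; [exact cycle_state_step|exact cycle_state_residue|lia].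
Qed.

Lemma cycle_schedule_avg_cost :
  is_lim_seq (avg_cost ss cycle_schedule) (INR (walk_weight state_cost p L) / INR L)%R.
Proof.
  destruct (sum_to_linear_bounds (cost ss cycle_schedule) 4 L HL) as [M HM].
  { intros t Ht. rewrite !cycle_schedule_cost, cycle_state_periodic by lia. reflexivity. }
  assert (Hm : sum_to (fun k => cost ss cycle_schedule (4 + k)) L = walk_weight state_cost p L).
  { rewrite (sum_to_ext _ (fun k => state_cost (p (((4 + (Lam - residue (p 0))) + k) mod L)))).
    - rewrite (sum_to_periodic_shift (fun k => state_cost (p (k mod L)))).
      + exact (walk_weight_unroll _ _ p L Hc).
      + intros k. replace (k + L) with (k + 1 * L) by lia. now rewrite Nat.Div0.mod_add.
    - intros k Hk. rewrite cycle_schedule_cost by lia. unfold cycle_state. do 3 f_equal. lia. }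
  unfold avg_cost. apply (avg_limit _ L _ M HL).
  intros T. rewrite total_cost_sum_to, <- Hm. apply HM.
Qed.

End CycleSchedule.

End States.

Theorem lemma6 (ss : list stream) (Hwf : List.Forall stream_wf ss) :
  exists (sigma : schedule) (P : nat),
    (1 <= P)%nat /\ (P <= 8 * big_lambda ss)%nat /\
    periodic sigma P /\ optimal ss sigma.
Proof.
  pose proof (big_lambda_neq_0 ss Hwf) as HL.
  destruct (state_walk_exists ss (8 * big_lambda ss) HL) as [p0 Hp0].
  destruct (min_ratio_exists _ _ (closed_walk_exists _ _ (state_cost ss) _ _ state_code_inj p0 Hp0))
    as [L [m [HL1 [[p [Hp [Hc Hm]]] Hbest]]]].
  exists (cycle_schedule ss p L), L. repeat split; try lia.
  - now apply cycle_schedule_periodic.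
  - apply cycle_schedule_feasible; auto; lia.
  - exists (INR m / INR L)%R. split.
    + rewrite <- Hm. apply cycle_schedule_avg_cost; auto; lia.
    + intros sg Hf l Hl.
      apply (avg_lower_bound (total_cost ss sg) L m (m * (8 * big_lambda ss + 4)) l);
        [lia| |exact Hl].
      exact (feasible_cost_lower_bound ss L m sg HL Hf Hbest).
Qed.
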